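(* The output of MPS is not always decomposable, even under lexicographic preferences. Concretely, for $n=3$, $p=2$, $D_F=\{1_F,2_F,3_F\}$, $D_B=\{1_B,2_B,3_B\}$ and the lexicographic preferences: agent 1: $F\rhd_1 B$, $1_F\rhd 2_F\rhd 3_F$, $1_B\rhd 2_B\rhd 3_B$; agent 2: $F\rhd_2 B$, $1_F\rhd 2_F\rhd 3_F$, $1_B\rhd 3_B\rhd 2_B$; agent 3: $B\rhd_3 F$, $1_F\rhd 2_F\rhd 3_F$, $2_B\rhd 3_B\rhd 1_B$, the assignment $\mathrm{MPS}(R)$ is not decomposable.
   Context: Setting: agents $N=\{1,\dots,n\}$; types $D_i$ pairwise disjoint, $|D_i|=n$, unit supply; bundles $\mathcal D=\prod_i D_i$, $x_i$ the type-$i$ component. An assignment is an $n\times|\mathcal D|$ matrix $(p_{j,x})$ with entries in $[0,1]$, rows summing to $1$, and $\sum_j\sum_{x\ni o}p_{j,x}=1$ for each item $o$; it is discrete if all entries are in $\{0,1\}$ and decomposable if it is a convex combination of discrete assignments. Lexicographic preference: importance order $\rhd_j$ on types and orders $\rhd^i_j$ on each $D_i$; $x\succ_j y$ iff some type $i$ has $x_i\rhd^i_j y_i$ and $x_{i'}=y_{i'}$ for all $i'\rhd_j i$. MPS: items start with supply $1$; a bundle is available if all its items have positive remaining supply. Continuously in time each agent eats her most preferred available bundle at rate $1$ (each item of it consumed at rate $1$, $p_{j,x}$ growing at rate $1$); exhausted items make all bundles containing them unavailable; run until all items are exhausted. *)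

From mathcomp Require Import all_boot all_order all_algebra.
Set Implicit Arguments. Unset Strict Implicit. Unset Printing Implicit Defensive.
Import Order.TTheory GRing.Theory Num.Theory.
Local Open Scope ring_scope.

(* Agents: 'I_n.  Types: 'I_p.  Items of type i: pairs (i, o) with o : 'I_n
   (so the D_i are pairwise disjoint and |D_i| = n).  A bundle picks one item
   of each type: x : {ffun 'I_p -> 'I_n}, x_i = x i. *)
Definition bundle (p n : nat) := {ffun 'I_p -> 'I_n}.
Definition item (p n : nat) := ('I_p * 'I_n)%type.

Definition in_bundle p n (o : item p n) (x : bundle p n) : bool := x o.1 == o.2.

(* A lexicographic preference, given by ranks (0 = best):
   imp i < imp i'       means  type i is more important than type i'
   rk i o < rk i o'     means  item o is preferred to item o' within D_i. *)
Record lexpref (p n : nat) := LexPref {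
  imp : 'I_p -> nat;
  rk  : 'I_p -> 'I_n -> nat }.

Definition lex_gt p n (L : lexpref p n) (x y : bundle p n) : bool :=
  [exists i : 'I_p, (rk L i (x i) < rk L i (y i))%N &&
     [forall i' : 'I_p, (imp L i' < imp L i)%N ==> (x i' == y i')]].

Definition assignment (R : realFieldType) (p n : nat) := 'I_n -> bundle p n -> R.

Definition is_assignment (R : realFieldType) p n (P : assignment R p n) : Prop :=
  (forall j x, 0 <= P j x <= 1) /\
  (forall j, \sum_(x : bundle p n) P j x = 1) /\
  (forall o : item p n, \sum_(j < n) \sum_(x : bundle p n | in_bundle o x) P j x = 1).

Definition is_discrete (R : realFieldType) p n (P : assignment R p n) : Prop :=
  is_assignment P /\ (forall j x, P j x = 0 \/ P j x = 1).

Definition decomposable (R : realFieldType) p n (P : assignment R p n) : Prop :=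
  exists (k : nat) (w : 'I_k -> R) (D : 'I_k -> assignment R p n),
    [/\ (forall l, 0 <= w l), \sum_(l < k) w l = 1,
        (forall l, is_discrete (D l)) &
        (forall j x, P j x = \sum_(l < k) w l * D l j x)].

(* Multi-type probabilistic serial (MPS), as an event-driven simulation of
   the continuous eating process: between two consecutive item-exhaustion
   events each agent eats her most preferred available bundle at rate 1. *)
Section MPS.
Variables (R : realFieldType) (p n : nat) (prof : 'I_n -> lexpref p n).

Definition available (s : item p n -> R) (x : bundle p n) : bool :=
  [forall i : 'I_p, 0 < s (i, x i)].

Definition mps_choice (s : item p n -> R) (j : 'I_n) : option (bundle p n) :=
  [pick x | available s x &&
            [forall y, available s y ==> ~~ lex_gt (prof j) y x]].

Definition mps_rate (s : item p n -> R) (o : item p n) : nat :=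
  #|[pred j : 'I_n | if mps_choice s j is Some x then in_bundle o x else false]|.

(* length of the current phase: time until the first eaten item is exhausted
   (the initial value 1 is never binding: supplies are <= 1 and rates >= 1) *)
Definition mps_dt (s : item p n -> R) : R :=
  \big[Num.min/1]_(o : item p n | (0 < mps_rate s o)%N) (s o / (mps_rate s o)%:R).

Definition mps_step (st : (item p n -> R) * assignment R p n)
  : (item p n -> R) * assignment R p n :=
  let: (s, P) := st in
  (fun o => s o - (mps_rate s o)%:R * mps_dt s,
   fun j x => P j x + (if mps_choice s j == Some x then mps_dt s else 0)).

(* every phase exhausts at least one item, so p * n phases suffice; once all
   items are exhausted no bundle is available and the step is the identity *)
Definition MPS : assignment R p n :=
  (iter (p * n) mps_step (fun _ => 1, fun _ _ => 0)).2.

End MPS.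

(* The instance: n = 3 agents (0,1,2 = agents 1,2,3), p = 2 types
   (0 = F, 1 = B), items 0,1,2 = 1_X, 2_X, 3_X. *)
Definition ex_imp (j : nat) : seq nat :=
  nth [::] [:: [:: 0; 1]%N;      (* agent 1: F > B *)
               [:: 0; 1]%N;      (* agent 2: F > B *)
               [:: 1; 0]%N] j.   (* agent 3: B > F *)

Definition ex_rk (j t : nat) : seq nat :=
  if t == 0%N then [:: 0; 1; 2]%N                       (* 1_F > 2_F > 3_F *)
  else nth [::] [:: [:: 0; 1; 2]%N;                     (* 1_B > 2_B > 3_B *)
                    [:: 0; 2; 1]%N;                     (* 1_B > 3_B > 2_B *)
                    [:: 2; 0; 1]%N] j.                  (* 2_B > 3_B > 1_B *)

Definition ex_profile (j : 'I_3) : lexpref 2 3 :=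
  LexPref (fun t : 'I_2 => nth 0%N (ex_imp j) t)
          (fun (t : 'I_2) (o : 'I_3) => nth 0%N (ex_rk j t) o).

(* The argument has two independent halves.
   1. A blocking criterion (section Blocking): if agent j receives bundle b
      with positive probability while another agent j' receives positive
      probability only on bundles sharing an item with b, the assignment is
      not a convex combination of discrete assignments.  Indeed some discrete
      component gives b to j; it then gives every item of b to j alone, so
      j' can only get a bundle disjoint from b there, yet all of those have
      probability 0 in the whole assignment, hence in every component.
   2. An exact run of the eating process on the instance (sections
      MPSFacts and Example): general facts identify the choices, rates and
      phase length of one MPS step, and five phases (of lengths 1/3, 1/6,
      1/6, 1/12, 1/4) exhaust all items.  In the result agent 1 gets
      (3_F, 2_B) with probability 1/12, while agent 3 only gets bundles
      containing 2_B or 3_F.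
   The theorem is then the criterion applied to agents 1, 3 and (3_F, 2_B). *)

From mathcomp Require Import all_boot all_order all_algebra.
From mathcomp Require Import lra.
From Stdlib Require Import FunctionalExtensionality.
Set Implicit Arguments. Unset Strict Implicit. Unset Printing Implicit Defensive.
Import Order.TTheory GRing.Theory Num.Theory.
Local Open Scope ring_scope.

Section Blocking.
Variables (R : realFieldType) (p n : nat).

Lemma discrete_ge0 (D : assignment R p n) : is_discrete D -> forall j x, 0 <= D j x.
Proof. by case=> -[Hb _] _ j x; case/andP: (Hb j x). Qed.

Lemma discrete_exclusive (D : assignment R p n) j j' (b x : bundle p n) i :
  is_discrete D -> D j b = 1 -> j' != j -> x i = b i -> D j' x = 0.
Proof.
move=> HD Djb j'j xib; have [[_ [_ Hitem]] _] := HD.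
have ge0 := discrete_ge0 HD.
have inb : in_bundle (i, b i) b by rewrite /in_bundle eqxx.
have inx : in_bundle (i, b i) x by rewrite /in_bundle xib eqxx.
have := Hitem (i, b i); rewrite (bigD1 j) //= [X in X + _](bigD1 b) //= Djb.
rewrite [X in _ + X](bigD1 j') //= [X in _ + (X + _)](bigD1 x) //= => Hsum.
have rest_j : 0 <= \sum_(y | in_bundle (i, b i) y && (y != b)) D j y.
  by apply: sumr_ge0.
have rest_j' : 0 <= \sum_(y | in_bundle (i, b i) y && (y != x)) D j' y.
  by apply: sumr_ge0.
have rest : 0 <= \sum_(k < n | (k != j) && (k != j'))
                   \sum_(y | in_bundle (i, b i) y) D k y.
  by apply: sumr_ge0 => k _; apply: sumr_ge0.
apply/le_anti; rewrite ge0 andbT; lra.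
Qed.

Lemma decomposable_witness (P : assignment R p n) j b :
  decomposable P -> 0 < P j b ->
  exists D : assignment R p n, [/\ is_discrete D, D j b = 1 &
                forall j' x, P j' x = 0 -> D j' x = 0].
Proof.
move=> [k [w [D [w_ge0 _ HD HP]]]] Pjb.
have wD_ge0 l j' x : 0 <= w l * D l j' x by rewrite mulr_ge0 ?discrete_ge0.
have [l wDl|none] := pickP (fun l => 0 < w l * D l j b); last first.
  by move: Pjb; rewrite HP ltNge sumr_le0 // => l _; rewrite leNgt none.
have [Dl0|Dl1] := (HD l).2 j b; first by move: wDl; rewrite Dl0 mulr0 ltxx.
have wl : 0 < w l by move: wDl; rewrite Dl1 mulr1.
exists (D l); split=> // j' x; rewrite HP => /eqP.
rewrite psumr_eq0 => [/allP/(_ l (mem_index_enum l))|l' _]; last exact: wD_ge0.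
by rewrite mulf_eq0 (gt_eqF wl) => /eqP.
Qed.

Lemma not_decomposable_of_blocking (P : assignment R p n) j j' (b : bundle p n) :
  j' != j -> 0 < P j b ->
  (forall x : bundle p n, (forall i, x i != b i) -> P j' x = 0) ->
  ~ decomposable P.
Proof.
move=> j'j Pjb block decP.
have [D [HD Djb supp]] := decomposable_witness decP Pjb.
have row0 x : D j' x = 0.
  have [i xib|disj] := pickP (fun i => x i == b i).
    exact: discrete_exclusive HD Djb j'j (eqP xib).
  by apply/supp/block => i; rewrite disj.
have [[_ [Hrow _]] _] := HD.
by move: (Hrow j'); rewrite big1 // => /eqP; rewrite eq_sym oner_eq0.
Qed.

End Blocking.

Section MPSFacts.
Variables (R : realFieldType) (p n : nat) (prof : 'I_n -> lexpref p n).

Lemma lex_gt_irr (L : lexpref p n) x : ~~ lex_gt L x x.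
Proof. by apply/existsP => -[i /andP[]]; rewrite ltnn. Qed.

Lemma mps_choice_spec (s : item p n -> R) j x : available s x ->
  (forall y, available s y ->
     y = x \/ lex_gt (prof j) x y && ~~ lex_gt (prof j) y x) ->
  mps_choice prof s j = Some x.
Proof.
move=> Ax best; rewrite /mps_choice; case: pickP => [y /andP[Ay /forallP Hy]|none].
  case: (best y Ay) => [-> //|/andP[Hxy _]].
  by have := Hy x; rewrite Ax Hxy.
have := none x; rewrite Ax /= => /negbT/negP; case.
apply/forallP => y; apply/implyP => Ay.
by case: (best y Ay) => [->|/andP[_ //]]; apply: lex_gt_irr.
Qed.

Lemma bigmin_le (I : eqType) (r : seq I) (P : pred I) (F : I -> R) i0 :
  i0 \in r -> P i0 -> \big[Num.min/1]_(i <- r | P i) F i <= F i0.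
Proof.
elim: r => // a r IH; rewrite inE big_cons => /orP[/eqP<- ->|Hr Pi].
  by rewrite ge_min lexx.
by case: (P a); rewrite ?ge_min (IH Hr Pi) ?orbT.
Qed.

Lemma bigmin_ge (I : eqType) (r : seq I) (P : pred I) (F : I -> R) v :
  v <= 1 -> (forall i, P i -> v <= F i) -> v <= \big[Num.min/1]_(i <- r | P i) F i.
Proof.
move=> v1 H; elim: r => [|a r IH]; first by rewrite big_nil.
by rewrite big_cons; case: ifP => // Pa; rewrite le_min H.
Qed.

Lemma mps_dt_spec (s : item p n -> R) (rt : item p n -> nat) o0 v :
  (forall o, mps_rate prof s o = rt o) -> (0 < rt o0)%N ->
  s o0 / (rt o0)%:R = v -> v <= 1 ->
  (forall o, (0 < rt o)%N -> v <= s o / (rt o)%:R) -> mps_dt prof s = v.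
Proof.
move=> Hr Ho0 Ev v1 H; apply/le_anti/andP; split.
  by rewrite -Ev -Hr; apply: bigmin_le; rewrite ?mem_index_enum ?Hr.
by apply: bigmin_ge => // o; rewrite !Hr; apply: H.
Qed.

Definition eat (P : assignment R p n) (ch : 'I_n -> option (bundle p n)) (dt : R)
  : assignment R p n :=
  fun j x => P j x + (if ch j == Some x then dt else 0).

Lemma mps_step_spec (s s' : item p n -> R) P ch rt dt :
  (forall j, mps_choice prof s j = ch j) -> (forall o, mps_rate prof s o = rt o) ->
  mps_dt prof s = dt -> (forall o, s' o = s o - (rt o)%:R * dt) ->
  mps_step prof (s, P) = (s', eat P ch dt).
Proof.
move=> Hc Hr Hd Hs; rewrite /mps_step; congr pair.
  by apply: functional_extensionality => o; rewrite Hs Hr Hd.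
apply: functional_extensionality => j; apply: functional_extensionality => x.
by rewrite /eat Hc Hd.
Qed.

Lemma mps_step_idle (s : item p n -> R) P :
  (forall j, mps_choice prof s j = None) -> (mps_step prof (s, P)).2 = P.
Proof.
move=> idle; apply: functional_extensionality => j.
by apply: functional_extensionality => x; rewrite /= idle addr0.
Qed.

End MPSFacts.

Section Example.
Variable R : realFieldType.
Local Notation prof := ex_profile.

Definition tF : 'I_2 := @Ordinal 2 0 isT.
Definition tB : 'I_2 := @Ordinal 2 1 isT.
Definition o1 : 'I_3 := @Ordinal 3 0 isT.
Definition o2 : 'I_3 := @Ordinal 3 1 isT.
Definition o3 : 'I_3 := @Ordinal 3 2 isT.
Definition mkb (a b : 'I_3) : bundle 2 3 := [ffun i : 'I_2 => if val i == 0%N then a else b].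

Lemma mkbF a b : mkb a b tF = a. Proof. by rewrite ffunE. Qed.
Lemma mkbB a b : mkb a b tB = b. Proof. by rewrite ffunE. Qed.

Lemma I2P (Q : 'I_2 -> Prop) : Q tF -> Q tB -> forall i, Q i.
Proof.
move=> QF QB [[|[|//]] lt_i2].
  by have -> : Ordinal lt_i2 = tF by apply/val_inj.
by have -> : Ordinal lt_i2 = tB by apply/val_inj.
Qed.

Lemma I3P (Q : 'I_3 -> Prop) : Q o1 -> Q o2 -> Q o3 -> forall i, Q i.
Proof.
move=> Q1 Q2 Q3 [[|[|[|//]]] lt_i3].
- by have -> : Ordinal lt_i3 = o1 by apply/val_inj.
- by have -> : Ordinal lt_i3 = o2 by apply/val_inj.
- by have -> : Ordinal lt_i3 = o3 by apply/val_inj.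
Qed.

Lemma bundleP (Q : bundle 2 3 -> Prop) : (forall a b, Q (mkb a b)) -> forall x, Q x.
Proof.
move=> Qab x; suff -> : x = mkb (x tF) (x tB) by [].
by apply/ffunP; apply: I2P; rewrite ?mkbF ?mkbB.
Qed.

Lemma some_mkb_eq a b c d : (Some (mkb a b) == Some (mkb c d)) = (a == c) && (b == d).
Proof.
apply/eqP/andP => [[E]|[/eqP-> /eqP->]//]; split; apply/eqP.
  by have := congr1 (fun f : bundle 2 3 => f tF) E; rewrite !mkbF.
by have := congr1 (fun f : bundle 2 3 => f tB) E; rewrite !mkbB.
Qed.

Lemma existsI2 (P : pred 'I_2) : [exists i, P i] = P tF || P tB.
Proof.
apply/existsP/orP => [[]|[]]; [by apply: I2P => ?; [left|right] | |];
  by [exists tF | exists tB].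
Qed.

Lemma forallI2 (P : pred 'I_2) : [forall i, P i] = P tF && P tB.
Proof.
apply/forallP/andP => [H|[PF PB]]; first by split; apply: H.
exact: I2P.
Qed.

Lemma cardI3 (P : pred 'I_3) : #|P| = (P o1 + P o2 + P o3)%N.
Proof.
rewrite -sum1_card big_mkcond !big_ord_recl big_ord0 /= addn0 addnA.
have indicator i : (if i \in P then 1 else 0)%N = P i by rewrite /in_mem /=; case: (P i).
rewrite !indicator; congr (_ + _ + _)%N; congr (nat_of_bool (P _)); exact/val_inj.
Qed.

Definition q (a b : nat) : R := a%:R / b%:R.

Lemma q_gt0 a b : (0 < q a b.+1) = (0 < a)%N.
Proof. by rewrite /q pmulr_lgt0 ?invr_gt0 ?ltr0n. Qed.

(* Supplies, given as the six values for 1_F, 2_F, 3_F, 1_B, 2_B, 3_B, and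
   rates in the same format; choices of agents 1, 2, 3. *)
Definition tab (f1 f2 f3 b1 b2 b3 : R) (o : item 2 3) : R :=
  if val o.1 == 0%N then nth 0 [:: f1; f2; f3] o.2 else nth 0 [:: b1; b2; b3] o.2.
Definition rtab (f1 f2 f3 b1 b2 b3 : nat) (o : item 2 3) : nat :=
  if val o.1 == 0%N then nth 0%N [:: f1; f2; f3] o.2 else nth 0%N [:: b1; b2; b3] o.2.
Definition ctab (x y z : bundle 2 3) (j : 'I_3) : option (bundle 2 3) :=
  Some (nth x [:: x; y; z] j).

Lemma availE (s : item 2 3 -> R) x :
  available s x = (0 < s (tF, x tF)) && (0 < s (tB, x tB)).
Proof. by rewrite /available forallI2. Qed.

Ltac solve_choice :=
  apply: mps_choice_spec;
  [ rewrite availE ?mkbF ?mkbB /= ?q_gt0 //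
  | apply: bundleP; do 2 apply: I3P; rewrite availE ?mkbF ?mkbB /= ?q_gt0 //= => _;
    first [by left | right; rewrite /lex_gt !existsI2 !forallI2 /= !mkbF !mkbB //]].

Ltac solve_rate ch :=
  case; apply: I2P; apply: I3P; rewrite /mps_rate cardI3 /= !ch /=;
  rewrite /in_bundle /= ?mkbF ?mkbB //.

Ltac solve_tab := case; apply: I2P; apply: I3P; rewrite /= /tab /rtab /q /=; lra.

Ltac solve_dt rt o :=
  apply: (@mps_dt_spec _ _ _ _ _ _ o _ rt);
  [ by [] | rewrite /= /tab /rtab /q /=; lra | rewrite /q; lra
  | case; apply: I2P; apply: I3P; rewrite /= ?rt /rtab /=; try by [];
    move=> _; rewrite /tab /q /=; lra ].

(* The five phases: S_k are the supplies after phase k, C_k the choices in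
   phase k; each phase lemma also records the rates and the phase length. *)
Local Notation S0 := (tab (q 1 1) (q 1 1) (q 1 1) (q 1 1) (q 1 1) (q 1 1)).

(* Phase 1: all take 1_F; agents 1, 2 take 1_B, agent 3 takes 2_B. *)
Local Notation C1 := (ctab (mkb o1 o1) (mkb o1 o1) (mkb o1 o2)).
Local Notation S1 := (tab (q 0 1) (q 1 1) (q 1 1) (q 1 3) (q 2 3) (q 1 1)).
Lemma phase1 P : mps_step prof (S0, P) = (S1, eat P C1 (q 1 3)).
Proof.
have ch j : mps_choice prof S0 j = C1 j by move: j; apply: I3P; solve_choice.
have rt : forall o, mps_rate prof S0 o = rtab 3 0 0 2 1 0 o by solve_rate ch.
by apply: (mps_step_spec P ch rt); [solve_dt rt (tF, o1) | solve_tab].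
Qed.

(* Phase 2: 1_F is gone, all move to 2_F; 1_B runs out. *)
Local Notation C2 := (ctab (mkb o2 o1) (mkb o2 o1) (mkb o2 o2)).
Local Notation S2 := (tab (q 0 1) (q 1 2) (q 1 1) (q 0 1) (q 1 2) (q 1 1)).
Lemma phase2 P : mps_step prof (S1, P) = (S2, eat P C2 (q 1 6)).
Proof.
have ch j : mps_choice prof S1 j = C2 j by move: j; apply: I3P; solve_choice.
have rt : forall o, mps_rate prof S1 o = rtab 0 3 0 2 1 0 o by solve_rate ch.
by apply: (mps_step_spec P ch rt); [solve_dt rt (tB, o1) | solve_tab].
Qed.

(* Phase 3: agents 1, 3 share 2_B, agent 2 takes 3_B; 2_F runs out. *)
Local Notation C3 := (ctab (mkb o2 o2) (mkb o2 o3) (mkb o2 o2)).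
Local Notation S3 := (tab (q 0 1) (q 0 1) (q 1 1) (q 0 1) (q 1 6) (q 5 6)).
Lemma phase3 P : mps_step prof (S2, P) = (S3, eat P C3 (q 1 6)).
Proof.
have ch j : mps_choice prof S2 j = C3 j by move: j; apply: I3P; solve_choice.
have rt : forall o, mps_rate prof S2 o = rtab 0 3 0 0 2 1 o by solve_rate ch.
by apply: (mps_step_spec P ch rt); [solve_dt rt (tF, o2) | solve_tab].
Qed.

(* Phase 4: all take 3_F; agent 1 gets (3_F, 2_B) until 2_B runs out. *)
Local Notation C4 := (ctab (mkb o3 o2) (mkb o3 o3) (mkb o3 o2)).
Local Notation S4 := (tab (q 0 1) (q 0 1) (q 3 4) (q 0 1) (q 0 1) (q 3 4)).
Lemma phase4 P : mps_step prof (S3, P) = (S4, eat P C4 (q 1 12)).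
Proof.
have ch j : mps_choice prof S3 j = C4 j by move: j; apply: I3P; solve_choice.
have rt : forall o, mps_rate prof S3 o = rtab 0 0 3 0 2 1 o by solve_rate ch.
by apply: (mps_step_spec P ch rt); [solve_dt rt (tB, o2) | solve_tab].
Qed.

(* Phase 5: all share (3_F, 3_B) until every item is exhausted. *)
Local Notation C5 := (ctab (mkb o3 o3) (mkb o3 o3) (mkb o3 o3)).
Local Notation S5 := (tab (q 0 1) (q 0 1) (q 0 1) (q 0 1) (q 0 1) (q 0 1)).
Lemma phase5 P : mps_step prof (S4, P) = (S5, eat P C5 (q 1 4)).
Proof.
have ch j : mps_choice prof S4 j = C5 j by move: j; apply: I3P; solve_choice.
have rt : forall o, mps_rate prof S4 o = rtab 0 0 3 0 0 3 o by solve_rate ch.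
by apply: (mps_step_spec P ch rt); [solve_dt rt (tF, o3) | solve_tab].
Qed.

Lemma exhausted j : mps_choice prof S5 j = None.
Proof.
rewrite /mps_choice; case: pickP => // y /andP[]; move: y.
by apply: bundleP; do 2 apply: I3P; rewrite availE ?mkbF ?mkbB /= ?q_gt0.
Qed.

(* The output of MPS on the instance: p * n = 6 steps, the last one idle. *)
Lemma MPS_example : MPS R prof =
  eat (eat (eat (eat (eat (fun _ _ => 0) C1 (q 1 3)) C2 (q 1 6)) C3 (q 1 6))
          C4 (q 1 12)) C5 (q 1 4).
Proof.
have init : (fun _ : item 2 3 => (1 : R)) = S0.
  by apply: functional_extensionality; solve_tab.
rewrite /MPS (_ : (2 * 3 = 6)%N) // !iterS [iter 0 _ _]/= init.
rewrite phase1 phase2 phase3 phase4 (surjective_pairing (mps_step _ _)) phase5.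
exact: mps_step_idle exhausted.
Qed.

Lemma MPS_example_agent1 : 0 < MPS R prof o1 (mkb o3 o2).
Proof. rewrite MPS_example /eat /= /ctab /= !some_mkb_eq /= /q; lra. Qed.

Lemma MPS_example_agent3 (x : bundle 2 3) :
  (forall i, x i != mkb o3 o2 i) -> MPS R prof o3 x = 0.
Proof.
move=> disj; have := disj tF; have := disj tB; rewrite mkbF mkbB.
move: x {disj}; apply: bundleP => a b; rewrite mkbF mkbB => b_ne a_ne.
rewrite MPS_example /eat /= /ctab /= !some_mkb_eq /=.
by rewrite ![o2 == b]eq_sym [o3 == a]eq_sym (negbTE b_ne) (negbTE a_ne) !andbF /= !addr0.
Qed.

End Example.

Theorem mainTheorem15 (R : realFieldType) :
  ~ decomposable (MPS R ex_profile).
Proof.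
apply: (@not_decomposable_of_blocking _ _ _ _ o1 o3 (mkb o3 o2)) => //.
- exact: MPS_example_agent1.
- exact: MPS_example_agent3.
Qed.
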